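(* Let $\mathcal{A}$ be a triangular algebra over a field $F$ with $\operatorname{char}(F)\neq2$. Then $\operatorname{JCent}(\mathcal{A})=\operatorname{Cent}(\mathcal{A})$.
   Context: A triangular algebra is an algebra of the form $\mathcal{A}=\begin{pmatrix}B & M\\ 0 & C\end{pmatrix}$ (with formal matrix operations), where $B,C$ are unital algebras and $M$ is a $(B,C)$-bimodule that is faithful as a left $B$-module and as a right $C$-module. $x\circ y=xy+yx$. $\operatorname{JCent}(\mathcal{A})$: linear $f:\mathcal{A}\to\mathcal{A}$ with $f(x\circ y)=f(x)\circ y$ for all $x,y$. $\operatorname{Cent}(\mathcal{A})$: linear $f$ with $f(xy)=f(x)y=xf(y)$ for all $x,y$. *)

From HB Require Import structures.
From mathcomp Require Import all_boot all_order all_algebra.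
Set Implicit Arguments. Unset Strict Implicit. Unset Printing Implicit Defensive.
Import GRing.Theory.
Local Open Scope ring_scope.

Record bimodule (F : fieldType) (B C : algType F) (M : lmodType F)
    (lb : B -> M -> M) (rc : M -> C -> M) : Prop := Bimodule {
  lb_addl : forall b1 b2 m, lb (b1 + b2) m = lb b1 m + lb b2 m;
  lb_addr : forall b m1 m2, lb b (m1 + m2) = lb b m1 + lb b m2;
  lb_mul  : forall b1 b2 m, lb (b1 * b2) m = lb b1 (lb b2 m);
  lb_one  : forall m, lb 1 m = m;
  lb_scalel : forall (k : F) b m, lb (k *: b) m = k *: lb b m;
  lb_scaler : forall (k : F) b m, lb b (k *: m) = k *: lb b m;
  rc_addl : forall m1 m2 c, rc (m1 + m2) c = rc m1 c + rc m2 c;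
  rc_addr : forall m c1 c2, rc m (c1 + c2) = rc m c1 + rc m c2;
  rc_mul  : forall m c1 c2, rc m (c1 * c2) = rc (rc m c1) c2;
  rc_one  : forall m, rc m 1 = m;
  rc_scalel : forall (k : F) m c, rc (k *: m) c = k *: rc m c;
  rc_scaler : forall (k : F) m c, rc m (k *: c) = k *: rc m c;
  lb_rc : forall b m c, rc (lb b m) c = lb b (rc m c)
}.

Definition lfaithful (B M : Type) (zB : B) (zM : M) (lb : B -> M -> M) :=
  forall b, (forall m, lb b m = zM) -> b = zB.
Definition rfaithful (C M : Type) (zC : C) (zM : M) (rc : M -> C -> M) :=
  forall c, (forall m, rc m c = zM) -> c = zC.

Section Triangular.
Variables (F : fieldType) (B C : algType F) (M : lmodType F)
  (lb : B -> M -> M) (rc : M -> C -> M).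

(* Elements of the triangular algebra [[B, M], [0, C]]. *)
Record tri := Tri { tB : B; tM : M; tC : C }.

Definition tri_add (x y : tri) : tri :=
  Tri (tB x + tB y) (tM x + tM y) (tC x + tC y).
Definition tri_scale (k : F) (x : tri) : tri :=
  Tri (k *: tB x) (k *: tM x) (k *: tC x).
(* formal matrix product *)
Definition tri_mul (x y : tri) : tri :=
  Tri (tB x * tB y) (lb (tB x) (tM y) + rc (tM x) (tC y)) (tC x * tC y).
Definition tri_jmul (x y : tri) : tri := tri_add (tri_mul x y) (tri_mul y x).

Definition tri_linear (f : tri -> tri) : Prop :=
  (forall x y, f (tri_add x y) = tri_add (f x) (f y)) /\
  (forall (k : F) x, f (tri_scale k x) = tri_scale k (f x)).

Definition JCent (f : tri -> tri) : Prop :=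
  tri_linear f /\ forall x y, f (tri_jmul x y) = tri_jmul (f x) y.

Definition Cent (f : tri -> tri) : Prop :=
  tri_linear f /\
  forall x y, f (tri_mul x y) = tri_mul (f x) y /\
              f (tri_mul x y) = tri_mul x (f y).

End Triangular.

From mathcomp Require Import all_boot all_order all_algebra.
Set Implicit Arguments. Unset Strict Implicit. Unset Printing Implicit Defensive.
Import GRing.Theory.
Local Open Scope ring_scope.

(* Conversely, if f is a Jordan
   centralizer and z := f 1, then 1 o y = 2y gives 2 f(y) = z o y, hence
   z o (x o y) = (z o x) o y.  Testing this identity against the idempotent
   e = diag(1, 0) and the elements of M forces z = diag(a, c) with
   a m = m c for all m in M; faithfulness then makes a and c central, so z is
   central in the triangular algebra, 2 f(y) = 2 z y, and f(y) = z y is a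
   centralizer once 2 is invertible. *)

Lemma addxx_inj (F : fieldType) (V : lmodType F) :
  (2%:R : F) != 0 -> injective (fun v : V => v + v).
Proof.
move=> two_neq0 v w; rewrite -!mulr2n -!scaler_nat => /(congr1 ( *:%R 2%:R^-1)).
by rewrite !scalerA mulVf // !scale1r.
Qed.

Section TriangularAlgebra.
Variables (F : fieldType) (B C : algType F) (M : lmodType F)
  (lb : B -> M -> M) (rc : M -> C -> M).
Hypothesis bim : bimodule lb rc.

Local Notation tri := (tri B C M).
Local Notation add := (@tri_add F B C M).
Local Notation mul := (tri_mul lb rc).
Local Notation jmul := (tri_jmul lb rc).

Lemma tri_ext (x y : tri) :
  tB x = tB y -> tM x = tM y -> tC x = tC y -> x = y.
Proof. by case: x => ???; case: y => ??? /= -> -> ->. Qed.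

Lemma lb0r b : lb b 0 = 0.
Proof. by apply: (@addrI _ (lb b 0)); rewrite -(lb_addr bim) !addr0. Qed.

Lemma rc0l c : rc 0 c = 0.
Proof. by apply: (@addrI _ (rc 0 c)); rewrite -(rc_addl bim) !addr0. Qed.

Lemma rc0r m : rc m 0 = 0.
Proof. by apply: (@addrI _ (rc m 0)); rewrite -(rc_addr bim) !addr0. Qed.

Lemma lbBl b1 b2 m : lb (b1 - b2) m = lb b1 m - lb b2 m.
Proof.
by apply: (@addIr _ (lb b2 m)); rewrite -(lb_addl bim) !subrK.
Qed.

Lemma rcBr m c1 c2 : rc m (c1 - c2) = rc m c1 - rc m c2.
Proof.
by apply: (@addIr _ (rc m c2)); rewrite -(rc_addr bim) !subrK.
Qed.

Lemma lfaithful_inj b1 b2 :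
  lfaithful 0 0 lb -> (forall m, lb b1 m = lb b2 m) -> b1 = b2.
Proof.
move=> faithB eq_lb; apply/eqP; rewrite -subr_eq0; apply/eqP.
by apply: faithB => m; rewrite lbBl eq_lb subrr.
Qed.

Lemma rfaithful_inj c1 c2 :
  rfaithful 0 0 rc -> (forall m, rc m c1 = rc m c2) -> c1 = c2.
Proof.
move=> faithC eq_rc; apply/eqP; rewrite -subr_eq0; apply/eqP.
by apply: faithC => m; rewrite rcBr eq_rc subrr.
Qed.

Ltac tri_simpl := do 2 rewrite /=
  ?(lb_addl bim) ?(lb_addr bim) ?(rc_addl bim) ?(rc_addr bim)
  ?mul1r ?mulr1 ?mul0r ?mulr0 ?(lb_one bim) ?(rc_one bim)
  ?lb0r ?rc0l ?rc0r ?addr0 ?add0r.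

Lemma tri_addxx_inj : (2%:R : F) != 0 -> injective (fun x : tri => add x x).
Proof.
move=> two_neq0 [xb xm xc] [yb ym yc] [/addxx_inj-> // /addxx_inj-> //].
by move/addxx_inj->.
Qed.

Lemma tri_mulA : associative mul.
Proof.
move=> [xb xm xc] [yb ym yc] [wb wm wc]; apply: tri_ext; rewrite /= ?mulrA //.
by rewrite (lb_addr bim) (rc_addl bim) (lb_mul bim) (rc_mul bim) (lb_rc bim) addrA.
Qed.

Lemma tri_jmulDl x y w : jmul (add x y) w = add (jmul x w) (jmul y w).
Proof.
apply: tri_ext; tri_simpl; rewrite ?mulrDl ?mulrDr; try by rewrite addrACA.
by rewrite [RHS]addrACA; congr (_ + _); rewrite addrACA.
Qed.

Definition tri1 : tri := Tri 1 0 1.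
Definition tri_e : tri := Tri 1 0 0.

Lemma tri_jmul1l y : jmul tri1 y = add y y.
Proof. by case: y => yb ym yc; apply: tri_ext; tri_simpl. Qed.

Section JordanAssociative.
Variable z : tri.
Hypothesis z_jassoc : forall x y, jmul z (jmul x y) = jmul (jmul z x) y.

Lemma jassoc_tM0 : tM z = 0.
Proof.
have := congr1 (@tM _ _ _ _) (z_jassoc tri_e tri_e).
case: z => a m c; tri_simpl => mm_eq.
by apply: (@addrI _ m); rewrite mm_eq addr0.
Qed.

Lemma jassoc_lb_rc n : lb (tB z) n = rc n (tC z).
Proof.
have := congr1 (@tM _ _ _ _) (z_jassoc tri_e (Tri 0 n 0)).
move: jassoc_tM0; case: z => a m c /= ->; tri_simpl.
by move/addrI.
Qed.

End JordanAssociative.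

Lemma diag_tri_commute (z : tri) :
  lfaithful 0 0 lb -> rfaithful 0 0 rc ->
  tM z = 0 -> (forall n, lb (tB z) n = rc n (tC z)) ->
  forall y, mul z y = mul y z.
Proof.
case: z => a m c faithB faithC /= -> a_c [yb ym yc].
apply: tri_ext; tri_simpl.
- apply: lfaithful_inj => // n.
  by rewrite !(lb_mul bim) !a_c (lb_rc bim).
- by rewrite a_c.
- apply: rfaithful_inj => // n.
  by rewrite !(rc_mul bim) -!a_c (lb_rc bim).
Qed.

Lemma cent_jcent (f : tri -> tri) : Cent lb rc f -> JCent lb rc f.
Proof.
case=> f_lin f_mul; split=> // x y.
by rewrite f_lin.1 (f_mul x y).1 (f_mul y x).2.
Qed.

Lemma jcent_cent (f : tri -> tri) :
  lfaithful 0 0 lb -> rfaithful 0 0 rc -> (2%:R : F) != 0 ->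
  JCent lb rc f -> Cent lb rc f.
Proof.
move=> faithB faithC two_neq0 [f_lin f_jmul].
set z := f tri1.
have f_dbl y : add (f y) (f y) = jmul z y.
  by rewrite -f_lin.1 -tri_jmul1l f_jmul.
have z_jassoc x y : jmul z (jmul x y) = jmul (jmul z x) y.
  by rewrite -f_dbl f_jmul -tri_jmulDl f_dbl.
have z_comm := diag_tri_commute faithB faithC (jassoc_tM0 z_jassoc)
  (jassoc_lb_rc z_jassoc).
have fE y : f y = mul z y.
  by apply: (tri_addxx_inj two_neq0); rewrite /= f_dbl /tri_jmul z_comm.
split=> // x y; rewrite !fE tri_mulA; split=> //.
by rewrite z_comm -tri_mulA.
Qed.

End TriangularAlgebra.

Theorem corollary3p8 (F : fieldType) (B C : algType F) (M : lmodType F)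
    (lb : B -> M -> M) (rc : M -> C -> M)
    (Hbim : bimodule lb rc)
    (HfB : lfaithful 0 0 lb) (HfC : rfaithful 0 0 rc)
    (Hchar : (2%:R : F) != 0) :
  forall f : tri B C M -> tri B C M,
    JCent lb rc f <-> Cent lb rc f.
Proof.
move=> f; split; first exact: jcent_cent.
exact: cent_jcent.
Qed.
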